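(* Let $\mathcal K\subseteq\mathbb{Z}$ be finite and $\Omega=\bigcup_{k\in\mathcal K}(k\pi,\,k\pi+\pi)$. Then $\cot:\Omega\to\mathbb{R}$ is amenable.
   Context: Relative distance on $\mathbb{R}$: $\mathrm{dist}(x,y)=0$ if $x=y=0$, $\mathrm{dist}(x,y)=|\log(y/x)|$ if $xy>0$, and $\mathrm{dist}(x,y)=\infty$ otherwise. For a real analytic function $f$ on an open set $\Omega\subseteq\mathbb{R}$, not identically zero, the condition number is $\kappa(f,x)=0$ if $x=0$, $\kappa(f,x)=\infty$ if $x\neq0$ and $f(x)=0$, and $\kappa(f,x)=|x|\,|f'(x)|/|f(x)|$ otherwise; $\mu(f,x)=1+\kappa(f,x)$. $f:\Omega\to\mathbb{R}$ is amenable if there is $C>0$ such that for every $x\in\Omega$ with $\kappa(f,x)<\infty$, the set $B_x=\{y\in\mathbb{R}:\mathrm{dist}(y,x)<1/(C\mu(f,x))\}$ is contained in $\Omega$ and $\mu(f,y)\leq C\mu(f,x)$ for all $y\in B_x$. *)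

From Stdlib Require Import Reals Lra ZArith List.
From Coquelicot Require Import Coquelicot.
Open Scope R_scope.

Definition reldist (x y : R) : Rbar :=
  if Req_EM_T x 0 then
    (if Req_EM_T y 0 then Finite 0 else p_infty)
  else if Rlt_dec 0 (x * y) then Finite (Rabs (ln (y / x)))
  else p_infty.

Definition kappa (f : R -> R) (x : R) : Rbar :=
  if Req_EM_T x 0 then Finite 0
  else if Req_EM_T (f x) 0 then p_infty
  else Finite (Rabs x * Rabs (Derive f x) / Rabs (f x)).

Definition mu (f : R -> R) (x : R) : Rbar := Rbar_plus (Finite 1) (kappa f x).

Definition amenable (Omega : R -> Prop) (f : R -> R) : Prop :=
  exists C : R, 0 < C /\
    forall x : R, Omega x ->
    forall k : R, kappa f x = Finite k ->
      let B := fun y => Rbar_lt (reldist y x) (Finite (1 / (C * (1 + k)))) in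
      (forall y, B y -> Omega y) /\
      (forall y, B y -> Rbar_le (mu f y) (Finite (C * (1 + k)))).

Definition cot (x : R) : R := cos x / sin x.

Definition cotDomain (K : list Z) (x : R) : Prop :=
  exists k : Z, In k K /\ IZR k * PI < x /\ x < IZR k * PI + PI.

(* On a component (m pi, m pi + pi) of the domain one has
   kappa(cot, x) = |x| / G(x) with G(x) = |sin x cos x| = |sin 2x| / 2.
   G is 1-Lipschitz and bounded by the distance from x to the endpoints,
   which are zeros of sin.  If dist(y, x) < 1 / (8 (1 + kappa)) then
   |y - x| <= 2 dist(y, x) |x| <= G(x) / 4, so y stays in the component,
   G(y) >= 3 G(x) / 4 and |y| <= 5 |x| / 4; hence kappa(cot, y) <= 2 kappa(cot, x)
   and C = 8 works. *)
From Stdlib Require Import Reals ZArith List Lra Lia.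
From Coquelicot Require Import Coquelicot.
Open Scope R_scope.

Lemma Rabs_sin_sub_le a b : Rabs (sin b - sin a) <= Rabs (b - a).
Proof.
  destruct (MVT_abs sin cos a b) as [c [Hc _]].
  { intros; apply derivable_pt_lim_sin. }
  rewrite Hc.
  assert (Rabs (cos c) <= 1) by (apply Rabs_le; apply COS_bound).
  pose proof (Rabs_pos (b - a)). nra.
Qed.

Lemma Rabs_sin_cos_sub_le x y :
  Rabs (sin y * cos y - sin x * cos x) <= Rabs (y - x).
Proof.
  pose proof (Rabs_sin_sub_le (2 * x) (2 * y)) as H.
  rewrite !sin_2a in H.
  replace (2 * sin y * cos y - 2 * sin x * cos x)
    with (2 * (sin y * cos y - sin x * cos x)) in H by ring.
  replace (2 * y - 2 * x) with (2 * (y - x)) in H by ring.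
  rewrite !Rabs_mult, Rabs_pos_eq in H by lra. lra.
Qed.

Lemma Rabs_sin_cos_le_dist_mult_PI (k : Z) x :
  Rabs (sin x * cos x) <= Rabs (x - IZR k * PI).
Proof.
  pose proof (Rabs_sin_sub_le (IZR k * PI) x) as H.
  rewrite (sin_eq_0_1 (IZR k * PI)), Rminus_0_r in H by (exists k; reflexivity).
  assert (Rabs (cos x) <= 1) by (apply Rabs_le; apply COS_bound).
  pose proof (Rabs_pos (sin x)).
  rewrite Rabs_mult. nra.
Qed.

Section Component.

Variables (m : Z) (x : R).
Hypothesis Hx : IZR m * PI < x < IZR m * PI + PI.

Lemma component_neq0 : x <> 0.
Proof.
  intros ->. pose proof PI_RGT_0.
  assert (IZR m < 0 /\ -1 < IZR m) as [Hlt Hgt] by (split; nra).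
  apply lt_IZR in Hlt. apply (lt_IZR (-1)) in Hgt. lia.
Qed.

Lemma component_ball y :
  Rabs (y - x) < Rabs (sin x * cos x) -> IZR m * PI < y < IZR m * PI + PI.
Proof.
  intros Hd.
  pose proof (Rabs_sin_cos_le_dist_mult_PI m x) as Hl.
  pose proof (Rabs_sin_cos_le_dist_mult_PI (m + 1) x) as Hr.
  rewrite (Rabs_pos_eq (x - _)) in Hl by lra.
  rewrite plus_IZR, Rmult_plus_distr_r, Rmult_1_l, (Rabs_minus_sym x),
    (Rabs_pos_eq (_ - x)) in Hr by lra.
  apply Rabs_def2 in Hd. lra.
Qed.

End Component.

Lemma Derive_cot y : sin y <> 0 -> Derive cot y = - / (sin y) ^ 2.
Proof.
  intros Hs. apply is_derive_unique. unfold cot.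
  auto_derive; [assumption|].
  pose proof (sin2_cos2 y) as E. unfold Rsqr in E.
  transitivity (- (sin y * sin y + cos y * cos y) / sin y ^ 2);
    [field; assumption|].
  rewrite E. field. assumption.
Qed.

(* Since [cos x / 0 = 0], [cot x <> 0] already excludes [sin x = 0]. *)
Lemma cot_neq0 x : cot x <> 0 -> sin x * cos x <> 0.
Proof.
  unfold cot, Rdiv. intros H E. apply H.
  destruct (Rmult_integral _ _ E) as [-> | ->].
  - rewrite Rinv_0. ring.
  - ring.
Qed.

Lemma kappa_cot y : y <> 0 -> sin y * cos y <> 0 ->
  kappa cot y = Finite (Rabs y / Rabs (sin y * cos y)).
Proof.
  intros Hy Hg.
  assert (Hs : sin y <> 0) by (intros E; apply Hg; rewrite E; ring).
  assert (Hc : cos y <> 0) by (intros E; apply Hg; rewrite E; ring).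
  assert (Hcot : cot y <> 0).
  { unfold cot. unfold Rdiv. apply Rmult_integral_contrapositive_currified;
    [|apply Rinv_neq_0_compat]; assumption. }
  unfold kappa. destruct (Req_EM_T y 0); [contradiction|].
  destruct (Req_EM_T (cot y) 0); [contradiction|].
  f_equal. rewrite Derive_cot by assumption. unfold cot.
  rewrite Rabs_Ropp, !Rabs_mult, Rabs_div, Rabs_inv, <- RPow_abs by assumption.
  assert (Rabs (sin y) <> 0) by (apply Rabs_no_R0; assumption).
  assert (Rabs (cos y) <> 0) by (apply Rabs_no_R0; assumption).
  field. auto.
Qed.

Lemma kappa_cot_finite y k : y <> 0 -> kappa cot y = Finite k ->
  sin y * cos y <> 0 /\ k = Rabs y / Rabs (sin y * cos y).
Proof.
  intros Hy Hk.
  assert (Hg : sin y * cos y <> 0).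
  { apply cot_neq0. intros E. unfold kappa in Hk.
    destruct (Req_EM_T y 0); [contradiction|].
    destruct (Req_EM_T (cot y) 0); [discriminate | contradiction]. }
  rewrite kappa_cot in Hk by assumption. injection Hk as Hk. auto.
Qed.

Lemma Rabs_sub_1_le_of_Rabs_ln_lt q r : 0 < q -> r <= 1/2 ->
  Rabs (ln q) < r -> Rabs (q - 1) <= 2 * r.
Proof.
  intros Hq Hr Hln. apply Rabs_def2 in Hln as [Hup Hlo].
  assert (Hexp_up : q < exp r).
  { rewrite <- (exp_ln q) by assumption. apply exp_increasing. lra. }
  assert (Hexp_lo : exp (- r) < q).
  { rewrite <- (exp_ln q) by assumption. apply exp_increasing. lra. }
  pose proof (exp_ineq1_le (- r)).
  assert (Hinv : exp r * exp (- r) = 1).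
  { rewrite <- exp_plus, Rplus_opp_r. apply exp_0. }
  apply Rabs_le. split; nra.
Qed.

Lemma reldist_lt_Rabs_sub_le x y r : x <> 0 -> r <= 1/2 ->
  Rbar_lt (reldist y x) (Finite r) -> y <> 0 /\ Rabs (y - x) <= 2 * r * Rabs x.
Proof.
  intros Hx Hr Hd. unfold reldist in Hd.
  destruct (Req_EM_T y 0).
  { destruct (Req_EM_T x 0); [contradiction | destruct Hd]. }
  destruct (Rlt_dec 0 (y * x)) as [Hyx|]; [|destruct Hd].
  simpl in Hd.
  assert (Hq : 0 < y / x).
  { replace (y / x) with (y * x / (x * x)) by (field; assumption).
    apply Rdiv_lt_0_compat; [assumption | nra]. }
  replace (x / y) with (/ (y / x)) in Hd by (field; auto).
  rewrite ln_Rinv, Rabs_Ropp in Hd by assumption.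
  pose proof (Rabs_sub_1_le_of_Rabs_ln_lt _ _ Hq Hr Hd).
  split; [assumption|].
  replace (y - x) with (x * (y / x - 1)) by (field; assumption).
  rewrite Rabs_mult. pose proof (Rabs_pos x). nra.
Qed.

Lemma reldist_lt_cot_ball x y : x <> 0 -> sin x * cos x <> 0 ->
  Rbar_lt (reldist y x)
    (Finite (1 / (8 * (1 + Rabs x / Rabs (sin x * cos x))))) ->
  y <> 0 /\ Rabs (y - x) <= Rabs (sin x * cos x) / 4 /\
  Rabs y <= 5 / 4 * Rabs x.
Proof.
  intros Hx Hg Hd.
  set (G := Rabs (sin x * cos x)) in *.
  set (k := Rabs x / G) in *.
  set (r := 1 / (8 * (1 + k))) in *.
  assert (HG : 0 < G) by (apply Rabs_pos_lt; assumption).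
  assert (Hk : 0 <= k) by (apply Rdiv_le_0_compat; [apply Rabs_pos | assumption]).
  assert (HxG : Rabs x = k * G) by (unfold k; field; lra).
  assert (Hr : r * (8 * (1 + k)) = 1) by (unfold r; field; lra).
  assert (Hr0 : 0 < r) by (unfold r; apply Rdiv_lt_0_compat; lra).
  destruct (reldist_lt_Rabs_sub_le x y r Hx ltac:(nra) Hd) as [Hy Hyx].
  assert (Hrk : 8 * r * k <= 1) by nra.
  assert (Hsmall : 2 * r * Rabs x <= G / 4) by (rewrite HxG; nra).
  pose proof (Rabs_triang_inv y x).
  repeat split; [assumption | lra | nra].
Qed.

Lemma kappa_cot_le_of_near x y : y <> 0 -> sin x * cos x <> 0 ->
  Rabs (y - x) <= Rabs (sin x * cos x) / 4 -> Rabs y <= 5 / 4 * Rabs x ->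
  sin y * cos y <> 0 /\
  Rabs y / Rabs (sin y * cos y) <= 2 * (Rabs x / Rabs (sin x * cos x)).
Proof.
  intros Hy Hg Hyx Habs.
  assert (HG : 0 < Rabs (sin x * cos x)) by (apply Rabs_pos_lt; assumption).
  pose proof (Rabs_sin_cos_sub_le y x) as Hlip.
  pose proof (Rabs_triang_inv (sin x * cos x) (sin y * cos y)).
  rewrite (Rabs_minus_sym x) in Hlip.
  assert (Hgy : 3 / 4 * Rabs (sin x * cos x) <= Rabs (sin y * cos y)) by lra.
  split.
  - intros E. rewrite E, Rabs_R0 in Hgy. lra.
  - apply Rle_div_l; [lra|].
    set (k := Rabs x / Rabs (sin x * cos x)).
    assert (Hk : 0 <= k) by (apply Rdiv_le_0_compat; [apply Rabs_pos | lra]).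
    assert (Rabs x = k * Rabs (sin x * cos x)) by (unfold k; field; lra).
    nra.
Qed.

Theorem mainTheorem12 (K : list Z) : amenable (cotDomain K) cot.
Proof.
  exists 8. split; [lra|].
  intros x [m [Hm Hx]] k Hk; simpl.
  pose proof (component_neq0 m x Hx) as Hx0.
  destruct (kappa_cot_finite x k Hx0 Hk) as [Hg ->].
  split.
  - intros y Hy.
    destruct (reldist_lt_cot_ball x y Hx0 Hg Hy) as (_ & Hyx & _).
    exists m. split; [assumption|].
    apply (component_ball m x Hx).
    pose proof (Rabs_pos_lt _ Hg). lra.
  - intros y Hy.
    destruct (reldist_lt_cot_ball x y Hx0 Hg Hy) as (Hy0 & Hyx & Habs).
    destruct (kappa_cot_le_of_near x y Hy0 Hg Hyx Habs) as [Hgy Hle].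
    pose proof (Rdiv_le_0_compat (Rabs x) (Rabs (sin x * cos x))
      (Rabs_pos x) (Rabs_pos_lt _ Hg)).
    unfold mu. rewrite kappa_cot by assumption. simpl. lra.
Qed.
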